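(* Let $F$ be a finite hypergraph on vertex set $V$ all of whose edges have size $2$ or $3$. Let $(\gamma_v)_{v\in V}$ be independent $\{0,1\}$-valued random variables with $\Pr[\gamma_v=1]\le\rho$ for all $v$, where $0\le\rho\le 1/6$. For a set $S\subseteq V$ write $\gamma_S\neq 1$ for the event that $\gamma_s=0$ for some $s\in S$. For a vertex $x$ let $q_x=\Pr\big[\bigcap_{e\in F:\,x\in e}\{\gamma_{e\setminus\{x\}}\neq 1\}\big]$. Then for any vertices $x,y,z$ with $y\neq x$ and $z\neq x$, \[ \Pr\Big[\bigcap_{e\in F:\,x\in e,\,y\notin e}\{\gamma_{e\setminus\{x\}}\neq 1\}\Big]\le\Pr\Big[\bigcap_{e\in F:\,x\in e,\,y,z\notin e}\{\gamma_{e\setminus\{x\}}\neq 1\}\Big]\le q_x(1+3\rho). \] *)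

From HB Require Import structures.
From mathcomp Require Import all_boot all_order all_algebra.
Set Implicit Arguments. Unset Strict Implicit. Unset Printing Implicit Defensive.
Import Order.TTheory GRing.Theory Num.Theory.
Local Open Scope ring_scope.

(* Weight of an outcome gamma : {ffun V -> bool} under the product measure of
   independent Bernoulli variables with Pr[gamma_v = 1] = p v. *)
Definition bern_weight (R : realFieldType) (V : finType) (p : V -> R)
  (g : {ffun V -> bool}) : R :=
  \prod_(v : V) (if g v then p v else 1 - p v).

Definition Prob (R : realFieldType) (V : finType) (p : V -> R)
  (A : pred {ffun V -> bool}) : R :=
  \sum_(g : {ffun V -> bool} | A g) bern_weight p g.

Definition not_all_one (V : finType) (S : {set V}) (g : {ffun V -> bool}) : bool :=
  [exists s in S, ~~ g s].

Definition link_event (V : finType) (F : {set {set V}}) (x : V)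
  (P : pred {set V}) : pred {ffun V -> bool} :=
  fun g => [forall e in F, ((x \in e) && P e) ==> not_all_one (e :\ x) g].

Definition q_x (R : realFieldType) (V : finType) (p : V -> R)
  (F : {set {set V}}) (x : V) : R :=
  Prob p (link_event F x predT).

From HB Require Import structures.
From mathcomp Require Import all_boot all_order all_algebra.
From mathcomp Require Import ring lra.
Set Implicit Arguments. Unset Strict Implicit. Unset Printing Implicit Defensive.
Import Order.TTheory GRing.Theory Num.Theory.
Local Open Scope ring_scope.

(* Write B for the event that every edge e through x avoiding y and z has
   gamma_{e \ x} <> 1.  The first inequality is monotonicity: the edges avoiding
   y include those avoiding y and z, so the left-hand event imposes more
   constraints than B and is a sub-event of it.  For the second, B
   does not depend on gamma_y nor on gamma_z, so by independence
     Pr[B /\ gamma_y = 0 /\ gamma_z = 0] >= (1 - p_y - p_z) Pr[B] >= (1 - 2 rho) Pr[B].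
   On that smaller event every edge through x is "broken" (edges through y or z
   by gamma_y = 0 or gamma_z = 0), so its probability is at most q_x.  Finally
   (1 - 2 rho)(1 + 3 rho) = 1 + rho (1 - 6 rho) >= 1 for 0 <= rho <= 1/6.
   The file first develops the product Bernoulli measure (positivity,
   monotonicity, and the factorisation for events independent of a
   coordinate), then the combinatorics of link events, then the theorem. *)

Section BernoulliProduct.

Variables (R : realFieldType) (V : finType) (p : V -> R).
Hypotheses (p_ge0 : forall v, 0 <= p v) (p_le1 : forall v, p v <= 1).

Implicit Types (A B : pred {ffun V -> bool}) (g : {ffun V -> bool}).

Definition flip (v : V) g : {ffun V -> bool} :=
  [ffun u => if u == v then ~~ g v else g u].

Lemma flipK (v : V) : involutive (flip v).
Proof.
move=> g; apply/ffunP=> u; rewrite !ffunE eqxx.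
by case: eqP => [->|]; rewrite ?negbK.
Qed.

Definition indep_of (v : V) A := forall g, A (flip v g) = A g.

Lemma bern_weight_ge0 g : 0 <= bern_weight p g.
Proof. by apply: prodr_ge0 => v _; case: (g v); rewrite ?subr_ge0. Qed.

Lemma Prob_ge0 A : 0 <= Prob p A.
Proof. by apply: sumr_ge0 => g _; apply: bern_weight_ge0. Qed.

Lemma Prob_mono A B : (forall g, A g -> B g) -> Prob p A <= Prob p B.
Proof.
move=> AB; rewrite [Prob p B]/Prob (bigID A) /=.
have -> : \sum_(g | B g && A g) bern_weight p g = Prob p A.
  by apply: eq_bigl => g; case Ag: (A g); rewrite ?andbT ?andbF ?(AB _ Ag).
by rewrite lerDl; apply: sumr_ge0 => g _; apply: bern_weight_ge0.
Qed.

(* Independence from v makes {gamma_v = 0} factor out with weight 1 - p v: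
   flipping v matches the outcomes with gamma_v = 0 and gamma_v = 1 in A,
   with weights in ratio (1 - p v) : p v. *)
Lemma Prob_indep_zero A v :
  indep_of v A -> Prob p (fun g => A g && ~~ g v) = (1 - p v) * Prob p A.
Proof.
move=> Av.
pose W g := \prod_(u | u != v) (if g u then p u else 1 - p u).
have weightE g : bern_weight p g = (if g v then p v else 1 - p v) * W g.
  by rewrite /bern_weight (bigD1 v).
have W_flip g : W (flip v g) = W g.
  by apply: eq_bigr => u /negPf uv; rewrite ffunE uv.
have zeroE : Prob p (fun g => A g && ~~ g v)
    = (1 - p v) * \sum_(g | A g && ~~ g v) W g.
  rewrite /Prob mulr_sumr; apply: eq_bigr => g /andP[_ /negPf gv].
  by rewrite weightE gv.
have oneE : Prob p (fun g => A g && g v)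
    = p v * \sum_(g | A g && ~~ g v) W g.
  rewrite /Prob mulr_sumr (reindex_inj (inv_inj (flipK v))) /=.
  apply: eq_big => g; first by rewrite Av ffunE eqxx.
  by move=> /andP[_]; rewrite weightE W_flip !ffunE eqxx; case: (g v).
have splitE : Prob p A = Prob p (fun g => A g && ~~ g v) + Prob p (fun g => A g && g v).
  rewrite /Prob (bigID (fun g => ~~ g v)) /=; congr (_ + _).
  by apply: eq_bigl => g; rewrite negbK.
by rewrite splitE zeroE oneE; ring.
Qed.

(* Union-bound-like lower estimate for forcing two coordinates to 0
   (the coordinates may coincide). *)
Lemma Prob_indep_zero2 A y z :
  indep_of y A -> indep_of z A ->
  (1 - p y - p z) * Prob p A <= Prob p (fun g => A g && ~~ g y && ~~ g z).
Proof.
move=> Ay Az; have PA0 := Prob_ge0 A.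
have Py := Prob_indep_zero Ay.
case: (eqVneq y z) => [<-|yz].
  have -> : Prob p (fun g => A g && ~~ g y && ~~ g y) = (1 - p y) * Prob p A.
    by rewrite -Py /Prob; apply: eq_bigl => g; rewrite -andbA andbb.
  by apply: ler_wpM2r => //; have := p_ge0 y; lra.
have Ayz : indep_of z (fun g => A g && ~~ g y).
  by move=> g; rewrite Az ffunE (negPf yz).
rewrite (Prob_indep_zero Ayz) Py mulrA; apply: ler_wpM2r => //.
have := mulr_ge0 (p_ge0 y) (p_ge0 z); lra.
Qed.

End BernoulliProduct.

Section LinkEvents.

Variables (V : finType) (F : {set {set V}}) (x : V).

Lemma link_event_weaken (P Q : pred {set V}) g :
  (forall e, P e -> Q e) -> link_event F x Q g -> link_event F x P g.
Proof.
move=> PQ /forallP H; apply/forallP => e; apply/implyP => eF.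
apply/implyP => /andP[xe Pe].
by move/implyP: (H e) => /(_ eF) /implyP; apply; rewrite xe PQ.
Qed.

Lemma link_event_indep (P : pred {set V}) v :
  (forall e, P e -> v \notin e) -> indep_of v (link_event F x P).
Proof.
move=> Pv g; apply: eq_forallb => e.
case Pe: (P e); rewrite ?andbF //=; congr (_ ==> _).
rewrite /not_all_one andbT; congr (_ ==> _); apply: eq_existsb => s.
case se: (s \in e :\ x) => //=; rewrite ffunE; case: eqP => // sv.
by move: se; rewrite sv in_setD1 (negPf (Pv _ Pe)) andbF.
Qed.

(* With gamma_y = gamma_z = 0, every edge through x that meets y or z
   (y, z distinct from x) is broken, so the constraint on the remaining edges
   gives the full event defining q_x. *)
Lemma link_event_complete (y z : V) g :
  y != x -> z != x ->
  link_event F x (fun e => (y \notin e) && (z \notin e)) g -> ~~ g y -> ~~ g z ->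
  link_event F x predT g.
Proof.
move=> yx zx /forallP H gy gz; apply/forallP => e; apply/implyP => eF.
apply/implyP => /andP[xe _].
case ye: (y \in e); first by apply/existsP; exists y; rewrite in_setD1 yx ye gy.
case ze: (z \in e); first by apply/existsP; exists z; rewrite in_setD1 zx ze gz.
by move/implyP: (H e) => /(_ eF) /implyP; apply; rewrite xe ye ze.
Qed.

End LinkEvents.

Lemma one_le_loss_gain (R : realFieldType) (rho : R) :
  0 <= rho -> rho <= 1 / 6 -> 1 <= (1 - 2 * rho) * (1 + 3 * rho).
Proof.
move=> rho0 rho1.
have slack : 0 <= rho * (1 - 6 * rho) by apply: mulr_ge0 => //; lra.
have expand : (1 - 2 * rho) * (1 + 3 * rho) = 1 + rho * (1 - 6 * rho) by ring.
by rewrite expand; lra.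
Qed.

Theorem mainTheorem9 (R : realFieldType) (V : finType) (F : {set {set V}})
  (p : V -> R) (rho : R)
  (hF : forall e, e \in F -> (#|e| == 2)%N || (#|e| == 3)%N)
  (hrho0 : 0 <= rho) (hrho1 : rho <= 1 / 6)
  (hp0 : forall v, 0 <= p v) (hp : forall v, p v <= rho)
  (x y z : V) (hyx : y != x) (hzx : z != x) :
  Prob p (link_event F x (fun e => y \notin e))
    <= Prob p (link_event F x (fun e => (y \notin e) && (z \notin e)))
  /\ Prob p (link_event F x (fun e => (y \notin e) && (z \notin e)))
    <= q_x p F x * (1 + 3 * rho).
Proof.
have hp1 v : p v <= 1 by apply: le_trans (hp v) _; lra.
split.
  by apply: Prob_mono => // g; apply: link_event_weaken => e /andP[].
set B := link_event F x _.
have PB0 : 0 <= Prob p B by apply: Prob_ge0.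
have By : indep_of y B by apply: link_event_indep => e /andP[].
have Bz : indep_of z B by apply: link_event_indep => e /andP[].
have to_q : Prob p (fun g => B g && ~~ g y && ~~ g z) <= q_x p F x.
  by apply: Prob_mono => // g /andP[/andP[Bg gy] gz]; apply: link_event_complete Bg gy gz.
have loss : (1 - 2 * rho) * Prob p B <= Prob p (fun g => B g && ~~ g y && ~~ g z).
  apply: le_trans (Prob_indep_zero2 hp0 hp1 By Bz).
  by apply: ler_wpM2r => //; have := hp y; have := hp z; lra.
have gain := one_le_loss_gain hrho0 hrho1.
have rho3 : 0 <= 1 + 3 * rho by lra.
apply: le_trans (_ : Prob p B * ((1 - 2 * rho) * (1 + 3 * rho)) <= _).
  by rewrite -{1}(mulr1 (Prob p B)) ler_wpM2l.
rewrite mulrA [Prob p B * _]mulrC.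
by apply: ler_wpM2r => //; apply: le_trans loss to_q.
Qed.
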